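(* Let $R$ be a commutative generalized p.q.-Baer $*$-ring. Then (1) $GC(x)=GC(x^* )$ for every $x\in R$; (2) for $x,y\in R$, if $(xR)^ny=0$ for some $n\in\mathbb N$, then $GC(x)GC(y)=0$.
   Context: A $*$-ring is a ring with an involution; a projection is $e$ with $e=e^*=e^2$; projections are ordered by $e\le f\iff e=ef$. $r_R(S)=\{a\in R: sa=0\ \forall s\in S\}$. $R$ is a generalized p.q.-Baer $*$-ring if for every $x\in R$ there are $n\in\mathbb N$ and a projection $e$ with $r_R((xR)^n)=eR$. For $x\in R$, $GC(x)$ (generalized central cover) is the smallest central projection $e$ such that $x^ne=x^n$ for some $n\in\mathbb N$; it exists for every element of a generalized p.q.-Baer $*$-ring. *)

From mathcomp Require Import all_boot all_order all_algebra.
Set Implicit Arguments. Unset Strict Implicit. Unset Printing Implicit Defensive.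
Import GRing.Theory.
Local Open Scope ring_scope.

Definition is_involution (R : comNzRingType) (star : R -> R) : Prop :=
  [/\ forall x y : R, star (x + y) = star x + star y,
      forall x y : R, star (x * y) = star y * star x &
      forall x : R, star (star x) = x].

Definition is_projection (R : comNzRingType) (star : R -> R) (e : R) : Prop :=
  e = star e /\ e = e * e.

Definition is_central_projection (R : comNzRingType) (star : R -> R) (e : R) : Prop :=
  is_projection star e /\ forall a : R, e * a = a * e.

Definition proj_le (R : comNzRingType) (e f : R) : Prop := e = e * f.

(* a \in r_R((xR)^n): every product (x r_1)(x r_2)...(x r_n) annihilates a. *)
Definition in_rann_xRn (R : comNzRingType) (x : R) (n : nat) (a : R) : Prop :=
  forall r : 'I_n -> R, (\prod_(i < n) (x * r i)) * a = 0.

Definition gen_pq_baer (R : comNzRingType) (star : R -> R) : Prop :=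
  forall x : R, exists n : nat, exists e : R,
    is_projection star e /\
    forall a : R, in_rann_xRn x n.+1 a <-> exists b : R, a = e * b.

Definition is_GC (R : comNzRingType) (star : R -> R) (x e : R) : Prop :=
  [/\ is_central_projection star e,
      (exists n : nat, x ^+ n.+1 * e = x ^+ n.+1) &
      forall f : R, is_central_projection star f ->
        (exists m : nat, x ^+ m.+1 * f = x ^+ m.+1) -> proj_le e f].

From mathcomp Require Import all_boot all_order all_algebra.
Import GRing.Theory.
Local Open Scope ring_scope.

(** In a commutative ring [r_R((xR)^n) = r_R(x^n)], and every projection is
  central.  For (1), applying the involution to [x^n e = x^n] gives
  [star(x)^n e = star(x)^n], so each of [GC(x)], [GC(star x)] lies below the other.
  For (2), the Baer property for [x^n] yields a projection [g] with
  [r_R(x^(nk)) = gR]: then [y = gy], so [GC(y) <= g], while [x^(nk) (1 - g) = x^(nk)],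
  so [GC(x) <= 1 - g]; hence [GC(x) GC(y) <= (1 - g) g = 0]. *)

Section Involution.

Variables (R : comNzRingType) (star : R -> R).
Hypothesis star_inv : is_involution star.

Lemma starM (x y : R) : star (x * y) = star x * star y.
Proof. by case: star_inv => _ HM _; rewrite HM mulrC. Qed.

Lemma star1 : star 1 = 1.
Proof.
case: star_inv => _ _ HI.
by rewrite -[star 1]mulr1 -{2}[1]HI -starM mul1r HI.
Qed.

Lemma starN (x : R) : star (- x) = - star x.
Proof.
case: star_inv => HA _ _.
have star0 : star 0 = 0 by apply: (addrI (star 0)); rewrite -HA !addr0.
by apply: (addrI (star x)); rewrite -HA !subrr star0.
Qed.

Lemma starX (x : R) (k : nat) : star (x ^+ k) = star x ^+ k.
Proof. by elim: k => [|k IH]; rewrite ?star1 // !exprS starM IH. Qed.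

Lemma projection_subr (g : R) : is_projection star g -> is_projection star (1 - g).
Proof.
case=> Pg Ig; case: star_inv => HA _ _; split.
  by rewrite HA starN star1 -Pg.
by rewrite mulrBr mulr1 mulrBl mul1r -Ig subrr subr0.
Qed.

Lemma expr_mul_proj_star (x e : R) (n : nat) :
  is_projection star e -> x ^+ n * e = x ^+ n -> star x ^+ n * e = star x ^+ n.
Proof. by case=> Pe _ Hn; rewrite [e]Pe -starX -starM Hn. Qed.

End Involution.

Lemma central_projectionE (R : comNzRingType) (star : R -> R) (e : R) :
  is_central_projection star e <-> is_projection star e.
Proof. by split=> [[]|Pe] //; split=> [|a]; last rewrite mulrC. Qed.

Lemma proj_le_anti (R : comNzRingType) (e f : R) :
  proj_le e f -> proj_le f e -> e = f.
Proof. by move=> ef fe; rewrite {1}ef {2}fe mulrC. Qed.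

Lemma in_rann_xRnE (R : comNzRingType) (x a : R) (n : nat) :
  in_rann_xRn x n a <-> x ^+ n * a = 0.
Proof.
split=> [/(_ (fun _ => 1))|Ha r].
  by rewrite prodr_const card_ord mulr1.
by rewrite big_split /= prodr_const card_ord mulrAC Ha mul0r.
Qed.

Lemma gen_pq_baer_rann {R : comNzRingType} {star : R -> R} :
  gen_pq_baer star -> forall {x y : R} {n : nat}, x ^+ n.+1 * y = 0 ->
  exists (m : nat) (g : R),
    [/\ is_projection star g, x ^+ m.+1 * g = 0 & y = g * y].
Proof.
move=> Hbaer x y n xy0.
have [k [g [[Pg Ig] Hg]]] := Hbaer (x ^+ n.+1).
have rannP a : x ^+ (n.+1 * k.+1) * a = 0 <-> exists b, a = g * b.
  by rewrite exprM; split=> [/in_rann_xRnE/Hg | /Hg/in_rann_xRnE].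
exists (n.+1 * k.+1).-1, g; rewrite prednK ?muln_gt0 //; split=> //.
  by apply/rannP; exists 1; rewrite mulr1.
have [b ->] : exists b, y = g * b.
  by apply/rannP; rewrite exprM exprS mulrAC xy0 mul0r.
by rewrite mulrA -Ig.
Qed.

Theorem mainTheorem6 (R : comNzRingType) (star : R -> R)
  (Hinv : is_involution star) (Hbaer : gen_pq_baer star) :
  (forall x e f : R, is_GC star x e -> is_GC star (star x) f -> e = f) /\
  (forall x y e f : R, (exists n : nat, in_rann_xRn x n.+1 y) ->
     is_GC star x e -> is_GC star y f -> e * f = 0).
Proof.
have [_ _ starK] := Hinv.
split.
  move=> x e f [/central_projectionE Pe [n Hn] Me] [/central_projectionE Pf [m Hm] Mf].
  apply: proj_le_anti.
    by apply: Me; [exact/central_projectionE | exists m; rewrite -[x]starK;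
      exact: expr_mul_proj_star].
  by apply: Mf; [exact/central_projectionE | exists n; exact: expr_mul_proj_star].
move=> x y e f [n /in_rann_xRnE xy0] [_ _ Me] [_ _ Mf].
have [m [g [Pg xg0 yg]]] := gen_pq_baer_rann Hbaer xy0.
have fg : proj_le f g.
  by apply: Mf; [exact/central_projectionE | exists 0%N; rewrite expr1 mulrC -yg].
have eg : proj_le e (1 - g).
  apply: Me; first exact/central_projectionE/projection_subr.
  by exists m; rewrite mulrBr mulr1 xg0 subr0.
have [_ Ig] := Pg.
by rewrite fg eg mulrACA mulrBl mul1r -Ig subrr mulr0.
Qed.
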